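(* Let $H$ be a bialgebra over a commutative ring $k$ (with $\otimes=\otimes_k$, Sweedler notation $\Delta(h)=h_1\otimes h_2$). For a left $H$-module $M$ let $\theta_M\colon H\otimes H\otimes M\to H\otimes H\otimes M$, $\theta_M(a\otimes b\otimes m)=a_1b\otimes a_2\otimes m$. With $\mathrm T,\mathrm G,\mathrm V,\mathrm T^\theta$ and $\tilde\Lambda=\mathrm{id}\colon\mathrm V\mathrm T^\theta\Rightarrow\mathrm T\mathrm V$ as in the context: (1) The unique natural transformation $\tilde\Omega\colon\mathrm T^\theta\mathrm G\Rightarrow\mathrm G\mathrm T$ whose mate under $\mathrm V\dashv\mathrm G$ equals $\tilde\Lambda$ is given, for every left $H$-module $M$, by $\tilde\Omega_M(a\otimes b\otimes m)=\theta_M(a\otimes b\otimes m)=a_1b\otimes a_2\otimes m$. (2) For every left $H$-module $M$, $\tilde\Omega_M$ is a morphism of Hopf modules from $\mathrm T^\theta(\mathrm G(M))$ to $\mathrm G(\mathrm T(M))$. (3) If $H$ is a Hopf algebra with bijective antipode $S$, then $\theta_M$ is invertible with inverse $\theta_M^{-1}(a\otimes b\otimes m)=b_2\otimes S^{-1}(b_1)a\otimes m$; moreover, $\tilde\Omega$ implements an extension $\mathbb T^\theta$ of $\mathbb T$ through $\mathrm V\dashv\mathrm G$.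
   Context: ${}_H\mathrm{Mod}$ is the category of left $H$-modules; ${}^H_H\mathrm{Mod}$ is the category of (left-left) Hopf modules: left $H$-modules $M$ with a left $H$-comodule structure $m\mapsto m_{-1}\otimes m_0$ satisfying $(hm)_{-1}\otimes(hm)_0=h_1m_{-1}\otimes h_2m_0$, with morphisms the module-and-comodule maps. $\mathbb T$ is the comonad on ${}_H\mathrm{Mod}$ with $\mathrm T(M)=H\otimes M$ (free action $h'(h\otimes m)=h'h\otimes m$), $\Delta^{\mathbb T}_M(h\otimes m)=h\otimes1\otimes m$, $\varepsilon^{\mathbb T}_M(h\otimes m)=hm$ (induced by the free--forgetful adjunction with $k$-modules). $\mathrm V\colon{}^H_H\mathrm{Mod}\to{}_H\mathrm{Mod}$ is the forgetful functor, left adjoint to $\mathrm G\colon{}_H\mathrm{Mod}\to{}^H_H\mathrm{Mod}$, $\mathrm G(M)=H\otimes M$ with diagonal action $h(a\otimes m)=h_1a\otimes h_2m$ and coaction $\Delta\otimes\mathrm{id}_M$; the unit $\eta''$ of $\mathrm V\dashv\mathrm G$ is the coaction $\eta''_M(m)=m_{-1}\otimes m_0$ and the counit is $\varepsilon''_M=\varepsilon\otimes\mathrm{id}_M$. $\mathbb T^\theta$ is the comonad on ${}^H_H\mathrm{Mod}$ with $\mathrm T^\theta(M)=H\otimes M$ carrying the free action and the coaction $h\otimes m\mapsto h_1m_{-1}\otimes h_2\otimes m_0$, comultiplication $h\otimes m\mapsto h\otimes1\otimes m$ and counit $h\otimes m\mapsto hm$; thus $\mathrm V\mathrm T^\theta=\mathrm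 T\mathrm V$. The mate of $\tilde\Omega\colon\mathrm T^\theta\mathrm G\Rightarrow\mathrm G\mathrm T$ under $\mathrm V\dashv\mathrm G$ is $\varepsilon''\mathrm T\mathrm V\circ\mathrm V\tilde\Omega\mathrm V\circ\mathrm V\mathrm T^\theta\eta''$. ''$\tilde\Omega$ implements an extension $\mathbb T^\theta$ of $\mathbb T$'' means $\tilde\Omega$ is a natural isomorphism and $(\mathrm G,\tilde\Omega)$ is a lax morphism of comonads from $\mathbb T^\theta$ to $\mathbb T$: $\mathrm G\Delta^{\mathbb T}\circ\tilde\Omega=\tilde\Omega\mathrm T\circ\mathrm T^\theta\tilde\Omega\circ\Delta^{\mathbb T^\theta}\mathrm G$ and $\mathrm G\varepsilon^{\mathbb T}\circ\tilde\Omega=\varepsilon^{\mathbb T^\theta}\mathrm G$. *)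

From HB Require Import structures.
From mathcomp Require Import all_boot all_algebra.
From Stdlib Require Import ClassicalEpsilon.
Set Implicit Arguments.
Unset Strict Implicit.
Unset Printing Implicit Defensive.
Import GRing.Theory.
Local Open Scope ring_scope.

Section Tensor.
Variable k : comPzRingType.

Definition klinear (U W : lmodType k) (f : U -> W) : Prop :=
  forall (a : k) (x y : U), f (a *: x + y) = a *: f x + f y.

Definition kbilinear (U V W : lmodType k) (f : U -> V -> W) : Prop :=
  (forall v, klinear (fun u => f u v)) /\ (forall u, klinear (f u)).

Record tensor_product (U V : lmodType k) := TensorProduct {
  tp_carrier : lmodType k;
  tp_tmul : U -> V -> tp_carrier;
  tp_bilin : kbilinear tp_tmul;
  tp_exists : forall (W : lmodType k) (f : U -> V -> W), kbilinear f ->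
     exists g : tp_carrier -> W, klinear g /\ forall u v, g (tp_tmul u v) = f u v;
  tp_unique : forall (W : lmodType k) (g g' : tp_carrier -> W),
     klinear g -> klinear g' ->
     (forall u v, g (tp_tmul u v) = g' (tp_tmul u v)) -> forall t, g t = g' t
}.

Definition tensor_family := forall U V : lmodType k, tensor_product U V.

Variable tens : tensor_family.

Definition tensor (U V : lmodType k) : lmodType k := tp_carrier (tens U V).
Definition tmul (U V : lmodType k) (u : U) (v : V) : tensor U V :=
  tp_tmul (tens U V) u v.

(* The linear map U (x) V -> W induced by a bilinear f (junk if f is not
   bilinear). *)
Definition tlift (U V W : lmodType k) (f : U -> V -> W) : tensor U V -> W :=
  epsilon (inhabits (fun _ => 0))
    (fun g : tensor U V -> W => klinear g /\ forall u v, g (tmul u v) = f u v).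

Definition tmap (U V V' : lmodType k) (f : V -> V') : tensor U V -> tensor U V' :=
  tlift (fun u v => tmul u (f v)).

Variable H : algType k.

Definition is_bialgebra (Delta : H -> tensor H H) (eps : H -> k) : Prop :=
  [/\ klinear Delta,
      forall (a : k) (x y : H), eps (a *: x + y) = a * eps x + eps y,
      forall h : H,
        tlift (fun x y => tmul x (Delta y)) (Delta h)
        = tlift (fun x y => tlift (fun a b => tmul a (tmul b y)) (Delta x)) (Delta h),
      forall h : H, tlift (fun x y => eps x *: y) (Delta h) = h
        /\ tlift (fun x y => eps y *: x) (Delta h) = h
    & [/\ Delta 1 = tmul 1 1,
          forall a b : H, Delta (a * b)
            = tlift (fun x y => tlift (fun x' y' => tmul (x * x') (y * y'))
                                      (Delta b)) (Delta a),
          eps 1 = 1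
        & forall a b : H, eps (a * b) = eps a * eps b]].

Definition is_antipode (Delta : H -> tensor H H) (eps : H -> k) (S : H -> H) : Prop :=
  [/\ klinear S,
      forall h : H, tlift (fun x y => S x * y) (Delta h) = eps h *: 1
    & forall h : H, tlift (fun x y => x * S y) (Delta h) = eps h *: 1].

Variable Delta : H -> tensor H H.
Variable eps : H -> k.

Definition is_hmodule (M : lmodType k) (act : H -> M -> M) : Prop :=
  [/\ kbilinear act, forall m, act 1 m = m
    & forall a b m, act (a * b) m = act a (act b m)].

Definition is_hmodule_morphism (M M' : lmodType k) (act : H -> M -> M)
  (act' : H -> M' -> M') (f : M -> M') : Prop :=
  klinear f /\ forall a m, f (act a m) = act' a (f m).

Definition is_hopf_module (N : lmodType k) (act : H -> N -> N)
  (rho : N -> tensor H N) : Prop :=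
  [/\ is_hmodule act,
      klinear rho,
      forall n, tlift (fun x n0 => tlift (fun y z => tmul y (tmul z n0)) (Delta x)) (rho n)
                = tmap rho (rho n),
      forall n, tlift (fun x n0 => eps x *: n0) (rho n) = n
    &
      forall h n, rho (act h n)
        = tlift (fun h1 h2 => tlift (fun y n0 => tmul (h1 * y) (act h2 n0)) (rho n))
                (Delta h)].

Definition is_hopf_module_morphism (N N' : lmodType k)
  (act : H -> N -> N) (rho : N -> tensor H N)
  (act' : H -> N' -> N') (rho' : N' -> tensor H N') (f : N -> N') : Prop :=
  is_hmodule_morphism act act' f /\ forall n, rho' (f n) = tmap f (rho n).

(* T(M) = H (x) M with the free action *)
Definition free_act (M : lmodType k) (a : H) : tensor H M -> tensor H M :=
  tlift (fun x m => tmul (a * x) m).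

(* G(M) = H (x) M with the diagonal action and coaction Delta (x) id *)
Definition diag_act (M : lmodType k) (act : H -> M -> M) (a : H)
  : tensor H M -> tensor H M :=
  tlift (fun x m => tlift (fun a1 a2 => tmul (a1 * x) (act a2 m)) (Delta a)).

Definition G_coact (M : lmodType k) : tensor H M -> tensor H (tensor H M) :=
  tlift (fun x m => tlift (fun y z => tmul y (tmul z m)) (Delta x)).

(* T^theta(N) = H (x) N with free action and coaction
   h (x) n |-> h_1 n_{-1} (x) h_2 (x) n_0 *)
Definition Ttheta_coact (N : lmodType k) (rho : N -> tensor H N)
  : tensor H N -> tensor H (tensor H N) :=
  tlift (fun h n => tlift (fun h1 h2 =>
           tlift (fun y n0 => tmul (h1 * y) (tmul h2 n0)) (rho n)) (Delta h)).

(* comultiplication / counit of T (and of T^theta, same formulas) *)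
Definition T_comult (M : lmodType k) : tensor H M -> tensor H (tensor H M) :=
  tlift (fun h m => tmul h (tmul 1 m)).
Definition T_counit (M : lmodType k) (act : H -> M -> M) : tensor H M -> M :=
  tlift (fun h m => act h m).

(* counit of V -| G : eps (x) id *)
Definition G_counit (M : lmodType k) : tensor H M -> M :=
  tlift (fun x m => eps x *: m).

Definition theta (M : lmodType k) : tensor H (tensor H M) -> tensor H (tensor H M) :=
  tlift (fun a t => tlift (fun b m =>
           tlift (fun a1 a2 => tmul (a1 * b) (tmul a2 m)) (Delta a)) t).

Definition theta_inv (Sinv : H -> H) (M : lmodType k)
  : tensor H (tensor H M) -> tensor H (tensor H M) :=
  tlift (fun a t => tlift (fun b m =>
           tlift (fun b1 b2 => tmul b2 (tmul (Sinv b1 * a) m)) (Delta b)) t).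

Definition hmod_family := forall (M : lmodType k) (act : H -> M -> M),
  tensor H (tensor H M) -> tensor H (tensor H M).

(* Omega is a natural transformation T^theta G => G T between functors
   H-Mod -> Hopf modules: each component is a Hopf module morphism
   T^theta(G M) -> G(T M), natural in module maps f (on morphisms both
   functors act as id (x) id (x) f). *)
Definition is_nat_trans (Om : hmod_family) : Prop :=
  (forall (M : lmodType k) (act : H -> M -> M), is_hmodule act ->
     is_hopf_module_morphism
       (@free_act (tensor H M))
       (Ttheta_coact (G_coact (M:=M)))
       (diag_act (@free_act M))
       (@G_coact (tensor H M))
       (Om M act))
  /\
  (forall (M M' : lmodType k) (act : H -> M -> M) (act' : H -> M' -> M')
          (f : M -> M'),
     is_hmodule act -> is_hmodule act' -> is_hmodule_morphism act act' f ->
     forall u, Om M' act' (tmap (tmap f) u) = tmap (tmap f) (Om M act u)).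

Definition theta_fam : hmod_family := fun M (_ : H -> M -> M) => @theta M.

(* The mate of Omega under V -| G, at a Hopf module (N, act, rho):
   eps'' T V o V Omega V o V T^theta eta''. *)
Definition mate (Om : hmod_family) (N : lmodType k) (act : H -> N -> N)
  (rho : N -> tensor H N) : tensor H N -> tensor H N :=
  fun t => G_counit (Om N act (tmap rho t)).

Definition mate_is_id (Om : hmod_family) : Prop :=
  forall (N : lmodType k) (act : H -> N -> N) (rho : N -> tensor H N),
    is_hopf_module act rho -> forall t, mate Om act rho t = t.

Definition is_lax_comonad_morphism (Om : hmod_family) : Prop :=
  forall (M : lmodType k) (act : H -> M -> M), is_hmodule act ->
    (forall u, tmap (@T_comult M) (Om M act u)
               = Om (tensor H M) (@free_act M)
                    (tmap (Om M act) (@T_comult (tensor H M) u)))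
    /\ (forall u, tmap (T_counit act) (Om M act u)
                  = T_counit (diag_act act) u).

End Tensor.

(* Every map out of H (x) (H (x) M) is k-linear, hence determined on elementary tensors,
   so each identity is a Sweedler computation with theta(a (x) b (x) m) = a1 b (x) a2 (x) m.
   theta commutes with the actions because Delta is multiplicative and with the coactions
   because Delta is coassociative; the counit law gives (eps (x) id) theta = id (x) (eps (x) id),
   which makes the mate of theta the identity.  For uniqueness, a comodule map F into the
   cofree comodule H (x) N is F = (id (x) (eps (x) id) F) rho, so Omega is determined by
   (eps (x) id) Omega; naturality of Omega along the module map eps (x) id : G M -> M and the
   mate condition at the Hopf module G M force (eps (x) id) Omega_M = id (x) (eps (x) id).
   The inverse of theta rests on Sinv(b2) b1 = eps(b) = b2 Sinv(b1), which follows from the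
   antipode laws because S is an anti-homomorphism. *)

From HB Require Import structures.
From mathcomp Require Import all_boot all_algebra.
From Stdlib Require Import ClassicalEpsilon FunctionalExtensionality.
Set Implicit Arguments.
Unset Strict Implicit.
Unset Printing Implicit Defensive.
Import GRing.Theory.
Local Open Scope ring_scope.

Section TensorLift.
Variables (k : comPzRingType) (tens : tensor_family k).
Notation tm := (tmul tens).
Notation tl := (tlift (tens:=tens)).
Implicit Types U V W X : lmodType k.

Lemma tlift_spec U V W (f : U -> V -> W) : kbilinear f ->
  klinear (tl f) /\ forall u v, tl f (tm u v) = f u v.
Proof.
move=> f_bilin; have [g g_spec] := tp_exists (tens U V) f_bilin.
rewrite /tlift; set P := (fun g => _ /\ _).
exact: (epsilon_spec (inhabits (fun _ => 0)) P (ex_intro _ g g_spec)).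
Qed.

Lemma tlift_klinear U V W (f : U -> V -> W) : kbilinear f -> klinear (tl f).
Proof. by case/tlift_spec. Qed.

Lemma tlift_tmul U V W (f : U -> V -> W) u v : kbilinear f -> tl f (tm u v) = f u v.
Proof. by case/tlift_spec=> _ ->. Qed.

Lemma tensor_ext U V W (g g' : tensor tens U V -> W) :
  klinear g -> klinear g' -> (forall u v, g (tm u v) = g' (tm u v)) -> g =1 g'.
Proof. exact: tp_unique. Qed.

Lemma klinear_comp U V W (g : V -> W) (f : U -> V) :
  klinear g -> klinear f -> klinear (fun x => g (f x)).
Proof. by move=> g_lin f_lin a x y; rewrite f_lin g_lin. Qed.

Lemma klinear_tmull U V W (f : U -> V) (w : W) :
  klinear f -> klinear (fun x => tm (f x) w).
Proof. exact: klinear_comp ((tp_bilin (tens V W)).1 w). Qed.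

Lemma klinear_tmulr U V W (f : U -> W) (v : V) :
  klinear f -> klinear (fun x => tm v (f x)).
Proof. exact: klinear_comp ((tp_bilin (tens V W)).2 v). Qed.

Lemma klinear_tlift_comp U V W X (g : U -> V -> W) (f : X -> tensor tens U V) :
  kbilinear g -> klinear f -> klinear (fun x => tl g (f x)).
Proof. by move/tlift_klinear; apply: klinear_comp. Qed.

Lemma klinear_tlift_param U V W X (g : X -> U -> V -> W) (t : tensor tens U V) :
  (forall p, kbilinear (g p)) -> (forall u v, klinear (fun p => g p u v)) ->
  klinear (fun p => tl (g p) t).
Proof.
move=> g_bilin g_lin a p q.
pose rhs t := a *: tl (g p) t + tl (g q) t.
have rhs_lin : klinear rhs.
  move=> c x y; rewrite /rhs !tlift_klinear //.
  by rewrite !scalerDr !scalerA mulrC addrACA.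
apply: (tensor_ext (g' := rhs)) => [|//|u v]; first exact: tlift_klinear.
by rewrite /rhs !tlift_tmul // g_lin.
Qed.

Lemma klinear_scale U V (c : k) (f : U -> V) : klinear f -> klinear (fun x => c *: f x).
Proof. by move=> f_lin a x y; rewrite f_lin scalerDr !scalerA mulrC. Qed.

Lemma klinear_mulr U (A : algType k) (f : U -> A) (b : A) :
  klinear f -> klinear (fun x => f x * b).
Proof. by move=> f_lin a x y; rewrite f_lin mulrDl scalerAl. Qed.

Lemma klinear_mull U (A : algType k) (f : U -> A) (b : A) :
  klinear f -> klinear (fun x => b * f x).
Proof. by move=> f_lin a x y; rewrite f_lin mulrDr scalerAr. Qed.

Lemma klinear_coef_scale U V W (e : V -> k) (f : U -> V) (w : W) :
  (forall a x y, e (a *: x + y) = a * e x + e y) -> klinear f ->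
  klinear (fun x => e (f x) *: w).
Proof. by move=> e_lin f_lin a x y; rewrite f_lin e_lin scalerDl scalerA. Qed.

Lemma klinear0 U V (f : U -> V) : klinear f -> f 0 = 0.
Proof.
move=> f_lin; have f00 := f_lin 1 0 0; rewrite !scale1r addr0 in f00.
by apply: (addrI (f 0)); rewrite addr0 -f00.
Qed.

Lemma klinearZ U V (f : U -> V) a x : klinear f -> f (a *: x) = a *: f x.
Proof. by move=> f_lin; have := f_lin a x 0; rewrite (klinear0 f_lin) !addr0. Qed.

End TensorLift.

Ltac klinear_tac :=
  cbv beta;
  lazymatch goal with
  | |- kbilinear _ => split; klinear_tac
  | |- forall _, _ => intro; klinear_tac
  | |- klinear _ =>
    first
    [ by []
    | assumption
    | apply: klinear_tmull; klinear_tac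
    | apply: klinear_tmulr; klinear_tac
    | apply: klinear_tlift_comp; klinear_tac
    | apply: klinear_tlift_param; klinear_tac
    | apply: tlift_klinear; klinear_tac
    | apply: klinear_mulr; klinear_tac
    | apply: klinear_mull; klinear_tac
    | apply: klinear_coef_scale; [assumption | klinear_tac]
    | apply: klinear_scale; klinear_tac
    | match goal with
      | h : klinear ?g |- klinear (fun _ => ?g _) =>
          apply: (klinear_comp (g := g)); [exact: h | klinear_tac]
      | h : kbilinear ?g |- klinear (fun _ => ?g _ ?v) =>
          apply: (klinear_comp (g := fun u => g u v)); [exact: h.1 v | klinear_tac]
      | h : kbilinear ?g |- klinear (fun _ => ?g ?u _) =>
          apply: (klinear_comp (g := g u)); [exact: h.2 u | klinear_tac]
      | h : kbilinear ?g |- klinear (?g ?u) => exact: h.2 u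
      end
    | match goal with h : _ |- klinear _ => solve [apply: h] end ]
  end.

Section TensorMaps.
Variables (k : comPzRingType) (tens : tensor_family k).
Notation tm := (tmul tens).
Notation tl := (tlift (tens:=tens)).
Implicit Types U V W X : lmodType k.

Lemma tlift_comp U V W X (g : W -> X) (f : U -> V -> W) t :
  klinear g -> kbilinear f -> g (tl f t) = tl (fun u v => g (f u v)) t.
Proof.
move=> g_lin f_bilin; move: t; apply: tensor_ext; try klinear_tac.
by move=> u v; rewrite !tlift_tmul //; klinear_tac.
Qed.

Lemma eq_tlift U V W (f g : U -> V -> W) t :
  (forall u v, f u v = g u v) -> tl f t = tl g t.
Proof.
by move=> fg; have -> : f = g by do 2!apply: functional_extensionality => ?.
Qed.

Lemma exchange_tlift U1 V1 U2 V2 W (F : U1 -> V1 -> U2 -> V2 -> W) t1 t2 :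
  (forall y u v, klinear (fun x => F x y u v)) ->
  (forall x u v, klinear (fun y => F x y u v)) ->
  (forall x y v, klinear (fun u => F x y u v)) ->
  (forall x y u, klinear (fun v => F x y u v)) ->
  tl (fun x y => tl (F x y) t2) t1 = tl (fun u v => tl (fun x y => F x y u v) t1) t2.
Proof.
move=> F1 F2 F3 F4; move: t1; apply: tensor_ext; try klinear_tac.
move=> x y; rewrite tlift_tmul; last klinear_tac.
by apply: eq_tlift => u v; rewrite tlift_tmul //; klinear_tac.
Qed.

Lemma tensor3_ext U V W X (g g' : tensor tens U (tensor tens V W) -> X) :
  klinear g -> klinear g' -> (forall u v w, g (tm u (tm v w)) = g' (tm u (tm v w))) ->
  g =1 g'.
Proof.
move=> g_lin g'_lin gg'; apply: tensor_ext => // u.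
by apply: (tensor_ext (g := fun t => g (tm u t)) (g' := fun t => g' (tm u t)));
  try klinear_tac.
Qed.

Lemma tmap_tmul U V V' (f : V -> V') (u : U) v :
  klinear f -> tmap (tens:=tens) f (tm u v) = tm u (f v).
Proof. by move=> f_lin; rewrite /tmap tlift_tmul //; klinear_tac. Qed.

Lemma tmap_klinear U V V' (f : V -> V') : klinear f -> klinear (tmap (tens:=tens) (U:=U) f).
Proof. by move=> f_lin; rewrite /tmap; klinear_tac. Qed.

Lemma tmap_comp U V W X (f : W -> X) (g : V -> W) (t : tensor tens U V) :
  klinear f -> klinear g -> tmap f (tmap g t) = tmap (fun x => f (g x)) t.
Proof.
move=> f_lin g_lin; move: t; apply: tensor_ext; try (rewrite /tmap; klinear_tac).
by move=> u v; rewrite !tmap_tmul //; klinear_tac.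
Qed.

Lemma eq_tmap U V W (f g : V -> W) (t : tensor tens U V) : f =1 g -> tmap f t = tmap g t.
Proof. by move=> fg; rewrite /tmap; under eq_tlift => u v do rewrite fg. Qed.

Lemma tmap_id U V (t : tensor tens U V) : tmap id t = t.
Proof.
move: t; apply: (tensor_ext (g := tmap id)); try (rewrite /tmap; klinear_tac).
by move=> u v; rewrite tmap_tmul.
Qed.

End TensorMaps.

Section StructureMaps.
Variables (k : comPzRingType) (tens : tensor_family k) (H : algType k).
Variables (Delta : H -> tensor tens H H) (eps : H -> k).
Hypothesis Delta_lin : klinear Delta.
Hypothesis eps_lin : forall (a : k) (x y : H), eps (a *: x + y) = a * eps x + eps y.
Notation tm := (tmul tens).
Notation tl := (tlift (tens:=tens)).
Implicit Types M N : lmodType k.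

Lemma free_act_tmul M (a x : H) (m : M) : free_act a (tm x m) = tm (a * x) m.
Proof. by rewrite /free_act tlift_tmul //; klinear_tac. Qed.

Lemma free_act_kbilinear M : kbilinear (@free_act _ tens H M).
Proof. by rewrite /free_act; klinear_tac. Qed.

Lemma diag_act_tmul M (act : H -> M -> M) a x m : kbilinear act ->
  diag_act Delta act a (tm x m) = tl (fun a1 a2 => tm (a1 * x) (act a2 m)) (Delta a).
Proof. by move=> act_bilin; rewrite /diag_act tlift_tmul //; klinear_tac. Qed.

Lemma diag_act_kbilinear M (act : H -> M -> M) : kbilinear act ->
  kbilinear (diag_act Delta act).
Proof. by move=> act_bilin; rewrite /diag_act; klinear_tac. Qed.

Lemma G_coact_tmul M x (m : M) :
  G_coact Delta (tm x m) = tl (fun y z => tm y (tm z m)) (Delta x).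
Proof. by rewrite /G_coact tlift_tmul //; klinear_tac. Qed.

Lemma G_coact_klinear M : klinear (G_coact Delta (M:=M)).
Proof. by rewrite /G_coact; klinear_tac. Qed.

Lemma Ttheta_coact_tmul N (rho : N -> tensor tens H N) h n : klinear rho ->
  Ttheta_coact Delta rho (tm h n)
  = tl (fun h1 h2 => tl (fun y n0 => tm (h1 * y) (tm h2 n0)) (rho n)) (Delta h).
Proof. by move=> rho_lin; rewrite /Ttheta_coact tlift_tmul //; klinear_tac. Qed.

Lemma G_counit_tmul M x (m : M) : G_counit eps (tm x m) = eps x *: m.
Proof. by rewrite /G_counit tlift_tmul //; klinear_tac. Qed.

Lemma G_counit_klinear M : klinear (@G_counit _ tens H eps M).
Proof. by rewrite /G_counit; klinear_tac. Qed.

Lemma G_counit_tmap M N (g : M -> N) (t : tensor tens H M) :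
  klinear g -> G_counit eps (tmap g t) = g (G_counit eps t).
Proof.
move=> g_lin; have counit_lin := @G_counit_klinear.
move: t; apply: tensor_ext; try klinear_tac.
by move=> x m; rewrite tmap_tmul // !G_counit_tmul klinearZ.
Qed.

Lemma T_comult_tmul M (h : H) (m : M) : T_comult (tm h m) = tm h (tm 1 m).
Proof. by rewrite /T_comult tlift_tmul //; klinear_tac. Qed.

Lemma T_comult_klinear M : klinear (@T_comult _ tens H M).
Proof. by rewrite /T_comult; klinear_tac. Qed.

Lemma T_counit_tmul M (act : H -> M -> M) (h : H) m :
  kbilinear act -> T_counit act (tm h m) = act h m.
Proof. by move=> act_bilin; rewrite /T_counit tlift_tmul. Qed.

Lemma T_counit_klinear M (act : H -> M -> M) : kbilinear act -> klinear (T_counit (tens:=tens) act).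
Proof. by move=> act_bilin; rewrite /T_counit; klinear_tac. Qed.

Lemma theta_tmul M a b (m : M) :
  theta Delta (tm a (tm b m)) = tl (fun a1 a2 => tm (a1 * b) (tm a2 m)) (Delta a).
Proof. by rewrite /theta !tlift_tmul //; klinear_tac. Qed.

Lemma theta_klinear M : klinear (theta Delta (M:=M)).
Proof. by rewrite /theta; klinear_tac. Qed.

Lemma theta_natural M M' (f : M -> M') u : klinear f ->
  theta Delta (tmap (tmap f) u) = tmap (tmap f) (theta Delta u).
Proof.
move=> f_lin; have tmapf_lin := tmap_klinear (tens:=tens) (U:=H) f_lin.
have theta_lin := @theta_klinear.
move: u; apply: tensor3_ext; try klinear_tac.
move=> a b m; rewrite !tmap_tmul // !theta_tmul tlift_comp; try klinear_tac.
by apply: eq_tlift => x y; rewrite !tmap_tmul.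
Qed.

Lemma T_counit_theta M (act : H -> M -> M) u : kbilinear act ->
  tmap (T_counit act) (theta Delta u) = T_counit (diag_act Delta act) u.
Proof.
move=> act_bilin; have diag_lin := diag_act_kbilinear act_bilin.
have counit_lin := @T_counit_klinear; have theta_lin := @theta_klinear.
move: u; apply: tensor3_ext; try klinear_tac.
move=> a b m; rewrite theta_tmul tlift_comp; try klinear_tac.
rewrite T_counit_tmul // diag_act_tmul //.
by apply: eq_tlift => x y; rewrite tmap_tmul ?T_counit_tmul //; klinear_tac.
Qed.

End StructureMaps.

Section Bialgebra.
Variables (k : comPzRingType) (tens : tensor_family k) (H : algType k).
Variables (Delta : H -> tensor tens H H) (eps : H -> k).
Hypothesis bialg : is_bialgebra Delta eps.
Notation tm := (tmul tens).
Notation tl := (tlift (tens:=tens)).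

Lemma bialgebra_Delta_klinear : klinear Delta.
Proof. by case: bialg. Qed.

Lemma bialgebra_eps_klinear (a : k) (x y : H) : eps (a *: x + y) = a * eps x + eps y.
Proof. by case: bialg. Qed.

Let Delta_lin := bialgebra_Delta_klinear.
Let eps_lin := bialgebra_eps_klinear.

Lemma Delta1 : Delta 1 = tm 1 1.
Proof. by case: bialg => _ _ _ _ []. Qed.

Lemma eps1 : eps 1 = 1.
Proof. by case: bialg => _ _ _ _ []. Qed.

Lemma epsM a b : eps (a * b) = eps a * eps b.
Proof. by case: bialg => _ _ _ _ []. Qed.

Lemma coassoc_tlift (W : lmodType k) (F : H -> H -> H -> W) h :
  (forall y z, klinear (fun x => F x y z)) ->
  (forall x z, klinear (fun y => F x y z)) ->
  (forall x y, klinear (fun z => F x y z)) ->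
  tl (fun x y => tl (F x) (Delta y)) (Delta h)
  = tl (fun x y => tl (fun u v => F u v y) (Delta x)) (Delta h).
Proof.
move=> F1 F2 F3; pose Phi := tl (fun x (t : tensor tens H H) => tl (F x) t).
have Phi_lin : klinear Phi by rewrite /Phi; klinear_tac.
have Phi_tmul x t : Phi (tm x t) = tl (F x) t by rewrite /Phi tlift_tmul //; klinear_tac.
case: bialg => _ _ /(_ h)/(congr1 Phi) + _ _.
rewrite !tlift_comp; try klinear_tac.
under eq_tlift => x y do rewrite Phi_tmul.
move=> ->; apply: eq_tlift => x y; rewrite tlift_comp; try klinear_tac.
by apply: eq_tlift => u v; rewrite Phi_tmul tlift_tmul //; klinear_tac.
Qed.

Lemma tlift_counitl (W : lmodType k) (F : H -> W) h :
  klinear F -> tl (fun x y => eps x *: F y) (Delta h) = F h.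
Proof.
move=> F_lin; case: bialg => _ _ _ /(_ h)[counitl _] _.
rewrite -{2}counitl tlift_comp; try klinear_tac.
by apply: eq_tlift => x y; rewrite klinearZ.
Qed.

Lemma tlift_counitr (W : lmodType k) (F : H -> W) h :
  klinear F -> tl (fun x y => eps y *: F x) (Delta h) = F h.
Proof.
move=> F_lin; case: bialg => _ _ _ /(_ h)[_ counitr] _.
rewrite -{2}counitr tlift_comp; try klinear_tac.
by apply: eq_tlift => x y; rewrite klinearZ.
Qed.

Lemma tlift_DeltaM (W : lmodType k) (F : H -> H -> W) a b : kbilinear F ->
  tl F (Delta (a * b))
  = tl (fun x y => tl (fun x' y' => F (x * x') (y * y')) (Delta b)) (Delta a).
Proof.
move=> F_bilin; case: bialg => _ _ _ _ [_ -> _ _].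
rewrite tlift_comp; try klinear_tac.
apply: eq_tlift => x y; rewrite tlift_comp; try klinear_tac.
by apply: eq_tlift => x' y'; rewrite tlift_tmul.
Qed.

End Bialgebra.

Section ThetaMorphism.
Variables (k : comPzRingType) (tens : tensor_family k) (H : algType k).
Variables (Delta : H -> tensor tens H H) (eps : H -> k).
Hypothesis bialg : is_bialgebra Delta eps.
Notation tm := (tmul tens).
Notation tl := (tlift (tens:=tens)).
Implicit Types M N : lmodType k.

Let Delta_lin := bialgebra_Delta_klinear bialg.
Let eps_lin := bialgebra_eps_klinear bialg.
Let theta_lin := @theta_klinear _ tens H Delta Delta_lin.
Let G_coact_lin := @G_coact_klinear _ tens H Delta Delta_lin.
Let G_counit_lin := @G_counit_klinear _ tens H eps eps_lin.

Lemma theta_free_act M h u :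
  theta Delta (free_act h u) = diag_act Delta (@free_act _ tens H M) h (theta Delta u).
Proof.
have free_lin := @free_act_kbilinear _ tens H.
move: u; apply: (tensor3_ext (g := fun u => theta Delta (free_act h u))); try klinear_tac.
move=> a b m; rewrite free_act_tmul !theta_tmul // (tlift_DeltaM bialg); last klinear_tac.
rewrite tlift_comp; try klinear_tac.
under [RHS]eq_tlift => a1 a2.
  rewrite diag_act_tmul //.
  under eq_tlift => h1 h2 do rewrite free_act_tmul.
  over.
rewrite exchange_tlift; try klinear_tac.
by apply: eq_tlift => x y; apply: eq_tlift => x' y'; rewrite !mulrA.
Qed.

Lemma G_coact_theta M n :
  G_coact Delta (theta Delta n)
  = tmap (theta Delta (M:=M)) (Ttheta_coact Delta (G_coact Delta (M:=M)) n).
Proof.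
move: n; apply: tensor3_ext; try klinear_tac.
move=> a b m; rewrite theta_tmul // tlift_comp; try klinear_tac.
under eq_tlift => a1 a2.
  rewrite G_coact_tmul // (tlift_DeltaM bialg); last klinear_tac.
  over.
rewrite Ttheta_coact_tmul // tlift_comp; try klinear_tac.
under [RHS]eq_tlift => h1 h2.
  rewrite G_coact_tmul // tlift_comp; try klinear_tac.
  under eq_tlift => y z do rewrite tmap_tmul //.
  rewrite tlift_comp; try klinear_tac.
  under eq_tlift => y z.
    rewrite tlift_tmul; last klinear_tac.
    rewrite theta_tmul // (tlift_comp (g := tm (h1 * y))); try klinear_tac.
    over.
  rewrite exchange_tlift; try klinear_tac.
  over.
by rewrite (coassoc_tlift bialg); try klinear_tac.
Qed.

Lemma theta_hopf_module_morphism M :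
  is_hopf_module_morphism
    (@free_act _ tens H (tensor tens H M)) (Ttheta_coact Delta (G_coact Delta (M:=M)))
    (diag_act Delta (@free_act _ tens H M)) (G_coact Delta (M:=tensor tens H M))
    (theta Delta (M:=M)).
Proof. by split; [split=> //; exact: theta_free_act | exact: G_coact_theta]. Qed.

Lemma G_counit_theta M (w : tensor tens H (tensor tens H M)) :
  G_counit eps (theta Delta w) = tmap (G_counit eps (M:=M)) w.
Proof.
move: w; apply: tensor3_ext; try klinear_tac.
move=> a b m; rewrite theta_tmul // tlift_comp; try klinear_tac.
under eq_tlift => x y do rewrite G_counit_tmul // (epsM bialg) -scalerA.
rewrite (tlift_counitl bialg (F := fun y => eps b *: tm y m)); last klinear_tac.
by rewrite tmap_tmul // G_counit_tmul // klinearZ //; klinear_tac.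
Qed.

Lemma theta_mate N (act : H -> N -> N) (rho : N -> tensor tens H N) t :
  is_hopf_module Delta eps act rho -> G_counit eps (theta Delta (tmap rho t)) = t.
Proof.
case=> _ rho_lin _ rho_counit _.
by rewrite G_counit_theta tmap_comp // (eq_tmap _ rho_counit) tmap_id.
Qed.

Lemma T_comult_theta M u :
  tmap (@T_comult _ tens H M) (theta Delta u)
  = theta Delta (tmap (theta Delta (M:=M)) (T_comult u)).
Proof.
have comult_lin := @T_comult_klinear _ tens H.
move: u; apply: tensor3_ext; try klinear_tac.
move=> a b m; rewrite theta_tmul // tlift_comp; try klinear_tac.
rewrite T_comult_tmul tmap_tmul // theta_tmul // (Delta1 bialg) tlift_tmul; last klinear_tac.
rewrite mul1r theta_tmul //.
by apply: eq_tlift => x y; rewrite tmap_tmul ?T_comult_tmul.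
Qed.

End ThetaMorphism.

Section CofreeHopfModule.
Variables (k : comPzRingType) (tens : tensor_family k) (H : algType k).
Variables (Delta : H -> tensor tens H H) (eps : H -> k).
Hypothesis bialg : is_bialgebra Delta eps.
Notation tm := (tmul tens).
Notation tl := (tlift (tens:=tens)).
Implicit Types M N : lmodType k.

Let Delta_lin := bialgebra_Delta_klinear bialg.
Let eps_lin := bialgebra_eps_klinear bialg.
Let G_coact_lin := @G_coact_klinear _ tens H Delta Delta_lin.
Let G_counit_lin := @G_counit_klinear _ tens H eps eps_lin.

Lemma diag_act_hmodule M (act : H -> M -> M) :
  is_hmodule act -> is_hmodule (diag_act Delta act).
Proof.
case=> act_bilin act1 actM; have diag_lin := diag_act_kbilinear Delta_lin act_bilin.
split=> // [|a b]; apply: tensor_ext; try klinear_tac.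
  move=> x m; rewrite diag_act_tmul // (Delta1 bialg) tlift_tmul; last klinear_tac.
  by rewrite mul1r act1.
move=> x m; rewrite diag_act_tmul // (tlift_DeltaM bialg); last klinear_tac.
rewrite diag_act_tmul // tlift_comp; try klinear_tac.
under [RHS]eq_tlift => b1 b2 do rewrite diag_act_tmul //.
rewrite exchange_tlift; try klinear_tac.
by apply: eq_tlift => y z; apply: eq_tlift => y' z'; rewrite actM mulrA.
Qed.

Lemma G_coact_coassoc M (n : tensor tens H M) :
  tl (fun x n0 => tl (fun y z => tm y (tm z n0)) (Delta x)) (G_coact Delta n)
  = tmap (G_coact Delta (M:=M)) (G_coact Delta n).
Proof.
move: n; apply: tensor_ext; try klinear_tac.
move=> x m; rewrite G_coact_tmul // !tlift_comp; try klinear_tac.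
under eq_tlift => y z.
  rewrite tlift_tmul; last klinear_tac.
  over.
under [RHS]eq_tlift => y z.
  rewrite tmap_tmul // G_coact_tmul // (tlift_comp (g := tm y)); try klinear_tac.
  over.
by rewrite (coassoc_tlift bialg); try klinear_tac.
Qed.

Lemma G_counit_G_coact M (n : tensor tens H M) : G_counit eps (G_coact Delta n) = n.
Proof.
move: n; apply: (tensor_ext (g := fun n => G_counit eps (G_coact Delta n))); try klinear_tac.
move=> x m; rewrite G_coact_tmul // tlift_comp; try klinear_tac.
under eq_tlift => y z do rewrite G_counit_tmul //.
by rewrite (tlift_counitl bialg (F := fun z => tm z m)); try klinear_tac.
Qed.

Lemma G_coact_diag_act M (act : H -> M -> M) h (n : tensor tens H M) : kbilinear act ->
  G_coact Delta (diag_act Delta act h n)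
  = tl (fun h1 h2 => tl (fun y n0 => tm (h1 * y) (diag_act Delta act h2 n0))
                        (G_coact Delta n)) (Delta h).
Proof.
move=> act_bilin; have diag_lin := diag_act_kbilinear Delta_lin act_bilin.
move: n; apply: tensor_ext; try klinear_tac.
move=> x m; rewrite diag_act_tmul // tlift_comp; try klinear_tac.
under eq_tlift => h1 h2.
  rewrite G_coact_tmul // (tlift_DeltaM bialg); last klinear_tac.
  over.
under [RHS]eq_tlift => h1 h2.
  rewrite G_coact_tmul // tlift_comp; try klinear_tac.
  under eq_tlift => y z.
    rewrite tlift_tmul; last klinear_tac.
    rewrite diag_act_tmul // (tlift_comp (g := tm (h1 * y))); try klinear_tac.
    over.
  rewrite exchange_tlift; try klinear_tac.
  over.
by rewrite (coassoc_tlift bialg); try klinear_tac.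
Qed.

Lemma G_hopf_module M (act : H -> M -> M) :
  is_hmodule act -> is_hopf_module Delta eps (diag_act Delta act) (G_coact Delta (M:=M)).
Proof.
move=> act_hmod; split=> //.
- exact: diag_act_hmodule.
- exact: G_coact_coassoc.
- exact: G_counit_G_coact.
- by case: act_hmod => act_bilin _ _ h n; apply: G_coact_diag_act.
Qed.

Lemma G_counit_hmodule_morphism M (act : H -> M -> M) :
  is_hmodule act -> is_hmodule_morphism (diag_act Delta act) act (G_counit eps (M:=M)).
Proof.
case=> act_bilin _ _; have diag_lin := diag_act_kbilinear Delta_lin act_bilin.
split=> // a; apply: tensor_ext; try klinear_tac.
move=> x m; rewrite diag_act_tmul // tlift_comp; try klinear_tac.
under eq_tlift => y z do rewrite G_counit_tmul // (epsM bialg) -scalerA.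
rewrite (tlift_counitl bialg (F := fun z => eps x *: act z m)); last klinear_tac.
by rewrite G_counit_tmul // klinearZ //; klinear_tac.
Qed.

Lemma tmap_G_counit_G_coact M (n : tensor tens H M) :
  tmap (G_counit eps (M:=M)) (G_coact Delta n) = n.
Proof.
move: n; apply: (tensor_ext (g := fun n => tmap (G_counit eps (M:=M)) (G_coact Delta n)));
  try klinear_tac.
move=> x m; rewrite G_coact_tmul // tlift_comp; try klinear_tac.
under eq_tlift => y z.
  rewrite tmap_tmul // G_counit_tmul // klinearZ; last klinear_tac.
  over.
by rewrite (tlift_counitr bialg (F := fun y => tm y m)); try klinear_tac.
Qed.

Lemma cofree_comodule_mapE N M (rho : N -> tensor tens H N) (F : N -> tensor tens H M) u :
  klinear F -> (forall n, G_coact Delta (F n) = tmap F (rho n)) ->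
  F u = tmap (fun n => G_counit eps (F n)) (rho u).
Proof. by move=> F_lin F_colin; rewrite -[LHS]tmap_G_counit_G_coact F_colin tmap_comp. Qed.

Lemma natural_mate_id_G_counit (Om : hmod_family tens H) M (act : H -> M -> M) w :
  is_nat_trans Delta Om -> mate_is_id Delta eps Om -> is_hmodule act ->
  G_counit eps (Om M act w) = tmap (G_counit eps (M:=M)) w.
Proof.
move=> [_ Om_nat] Om_mate act_hmod.
have tmap_counit_lin := tmap_klinear (tens:=tens) (U:=H) (@G_counit_lin M).
have w_eq : w = tmap (tmap (G_counit eps (M:=M))) (tmap (G_coact Delta (M:=M)) w).
  by rewrite tmap_comp // (eq_tmap _ (@tmap_G_counit_G_coact M)) tmap_id.
rewrite {1}w_eq (Om_nat _ _ _ _ _ (diag_act_hmodule act_hmod) act_hmod).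
  rewrite G_counit_tmap //; have := Om_mate _ _ _ (G_hopf_module act_hmod) w.
  by rewrite /mate => ->.
exact: G_counit_hmodule_morphism.
Qed.

Lemma natural_mate_id_theta (Om : hmod_family tens H) M (act : H -> M -> M) u :
  is_nat_trans Delta Om -> mate_is_id Delta eps Om -> is_hmodule act ->
  Om M act u = theta Delta u.
Proof.
move=> Om_nat_trans Om_mate act_hmod.
have [[Om_lin _] Om_colin] := Om_nat_trans.1 M act act_hmod.
rewrite (cofree_comodule_mapE _ Om_lin Om_colin).
rewrite (cofree_comodule_mapE u (theta_klinear Delta_lin (M:=M)) (G_coact_theta bialg (M:=M))).
by apply: eq_tmap => w; rewrite natural_mate_id_G_counit // G_counit_theta.
Qed.

End CofreeHopfModule.

Section Antipode.
Variables (k : comPzRingType) (tens : tensor_family k) (H : algType k).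
Variables (Delta : H -> tensor tens H H) (eps : H -> k) (S Sinv : H -> H).
Hypotheses (bialg : is_bialgebra Delta eps) (antipode : is_antipode Delta eps S).
Hypotheses (SK : cancel S Sinv) (SinvK : cancel Sinv S).
Notation tm := (tmul tens).
Notation tl := (tlift (tens:=tens)).
Implicit Types M : lmodType k.

Let Delta_lin := bialgebra_Delta_klinear bialg.
Let eps_lin := bialgebra_eps_klinear bialg.

Lemma antipode_klinear : klinear S.
Proof. by case: antipode. Qed.

Let S_lin := antipode_klinear.

Lemma tlift_antipodel (W : lmodType k) (F : H -> W) h :
  klinear F -> tl (fun a b => F (S a * b)) (Delta h) = F (eps h *: 1).
Proof.
by move=> F_lin; case: antipode => _ <- _; rewrite tlift_comp //; klinear_tac.
Qed.

Lemma tlift_antipoder (W : lmodType k) (F : H -> W) h :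
  klinear F -> tl (fun a b => F (a * S b)) (Delta h) = F (eps h *: 1).
Proof.
by move=> F_lin; case: antipode => _ _ <-; rewrite tlift_comp //; klinear_tac.
Qed.

Lemma antipode1 : S 1 = 1.
Proof.
case: antipode => _ /(_ 1) + _; rewrite (Delta1 bialg) tlift_tmul; last klinear_tac.
by rewrite mulr1 (eps1 bialg) scale1r.
Qed.

Lemma antipodeM x y : S (x * y) = S y * S x.
Proof.
(* P is S(x1 y1) x2 y2 S(y3) S(x3): contracting x2 y2 S(y3) S(x3) by the right antipode
   law gives S(xy), contracting S(x1 y1) x2 y2 by the left one gives S(y) S(x). *)
pose P := tl (fun x1 x2 => tl (fun y1 y2 => tl (fun x21 x22 => tl (fun y21 y22 =>
            S (x1 * y1) * (x21 * (y21 * S y22) * S x22)) (Delta y2)) (Delta x2))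
            (Delta y)) (Delta x).
have P_Sxy : P = S (x * y).
  rewrite /P; under eq_tlift => x1 x2.
    under eq_tlift => y1 y2.
      under eq_tlift => x21 x22.
        rewrite (tlift_antipoder (F := fun z => S (x1 * y1) * (x21 * z * S x22)));
          last klinear_tac.
        rewrite mulr_algr -scalerAl -scalerAr.
        over.
      rewrite (tlift_antipoder (F := fun z => eps y2 *: (S (x1 * y1) * z))); last klinear_tac.
      rewrite -scalerAr mulr1.
      over.
    rewrite (tlift_counitr bialg (F := fun y1 => eps x2 *: S (x1 * y1))); last klinear_tac.
    over.
  by rewrite (tlift_counitr bialg (F := fun x1 => S (x1 * y))); try klinear_tac.
rewrite -P_Sxy /P.
under eq_tlift => x1 x2.
  rewrite exchange_tlift; try klinear_tac.
  over.
rewrite (coassoc_tlift bialg); try klinear_tac.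
under eq_tlift => x1 x2.
  under eq_tlift => a b.
    rewrite (coassoc_tlift bialg); try klinear_tac.
    over.
  rewrite exchange_tlift; try klinear_tac.
  under eq_tlift => y1 y2.
    under eq_tlift => a b.
      under eq_tlift => c d do rewrite -!mulrA [b * _]mulrA.
      over.
    rewrite -(tlift_DeltaM bialg (F := fun u v => S u * (v * (S y2 * S x2))));
      last klinear_tac.
    under eq_tlift => u v do rewrite mulrA.
    rewrite (tlift_antipodel (F := fun z => z * (S y2 * S x2))); last klinear_tac.
    rewrite (epsM bialg) -scalerAl mul1r -scalerA.
    over.
  under eq_tlift => y1 y2 do rewrite scalerA mulrC -scalerA.
  rewrite (tlift_counitl bialg (F := fun y2 => eps x1 *: (S y2 * S x2))); last klinear_tac.
  over.
by rewrite (tlift_counitl bialg (F := fun x2 => S y * S x2)); try klinear_tac.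
Qed.

Lemma Sinv_klinear : klinear Sinv.
Proof. by move=> a x y; apply: (can_inj SK); rewrite S_lin !SinvK. Qed.

Let Sinv_lin := Sinv_klinear.

Lemma tlift_Sinvl (W : lmodType k) (F : H -> W) h :
  klinear F -> tl (fun a b => F (Sinv b * a)) (Delta h) = F (eps h *: 1).
Proof.
move=> F_lin; have Sinv_antipode : tl (fun a b => Sinv b * a) (Delta h) = eps h *: 1.
  apply: (can_inj SK); rewrite (klinearZ (f := S)) // antipode1 tlift_comp; try klinear_tac.
  under eq_tlift => a b do rewrite antipodeM SinvK.
  by case: antipode => _ -> _.
by rewrite -Sinv_antipode tlift_comp //; klinear_tac.
Qed.

Lemma tlift_Sinvr (W : lmodType k) (F : H -> W) h :
  klinear F -> tl (fun a b => F (b * Sinv a)) (Delta h) = F (eps h *: 1).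
Proof.
move=> F_lin; have Sinv_antipode : tl (fun a b => b * Sinv a) (Delta h) = eps h *: 1.
  apply: (can_inj SK); rewrite (klinearZ (f := S)) // antipode1 tlift_comp; try klinear_tac.
  under eq_tlift => a b do rewrite antipodeM SinvK.
  by case: antipode => _ _ ->.
by rewrite -Sinv_antipode tlift_comp //; klinear_tac.
Qed.

Lemma theta_inv_tmul M a b (m : M) :
  theta_inv Delta Sinv (tm a (tm b m))
  = tl (fun b1 b2 => tm b2 (tm (Sinv b1 * a) m)) (Delta b).
Proof. by rewrite /theta_inv !tlift_tmul //; klinear_tac. Qed.

Lemma theta_inv_klinear M : klinear (theta_inv Delta Sinv (M:=M)).
Proof. by rewrite /theta_inv; klinear_tac. Qed.

Let theta_lin := @theta_klinear _ tens H Delta Delta_lin.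
Let theta_inv_lin := theta_inv_klinear.

Lemma thetaK M : cancel (theta Delta (M:=M)) (theta_inv Delta Sinv (M:=M)).
Proof.
apply: (tensor3_ext (g := fun u => theta_inv Delta Sinv (theta Delta u)) (g' := id));
  try klinear_tac.
move=> a b m /=; rewrite theta_tmul // tlift_comp; try klinear_tac.
under eq_tlift => a1 a2 do rewrite theta_inv_tmul.
rewrite (coassoc_tlift bialg); try klinear_tac.
under eq_tlift => x y.
  under eq_tlift => u v do rewrite mulrA.
  rewrite (tlift_Sinvl (F := fun z => tm y (tm (z * b) m))); last klinear_tac.
  rewrite -scalerAl mul1r (klinearZ (f := fun z => tm z m)); last klinear_tac.
  rewrite (klinearZ (f := tm y)); last klinear_tac.
  over.
by rewrite (tlift_counitl bialg (F := fun y => tm y (tm b m))); try klinear_tac.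
Qed.

Lemma theta_invK M : cancel (theta_inv Delta Sinv (M:=M)) (theta Delta (M:=M)).
Proof.
apply: (tensor3_ext (g := fun u => theta Delta (theta_inv Delta Sinv u)) (g' := id));
  try klinear_tac.
move=> a b m /=; rewrite theta_inv_tmul tlift_comp; try klinear_tac.
under eq_tlift => b1 b2 do rewrite theta_tmul //.
rewrite (coassoc_tlift bialg); try klinear_tac.
under eq_tlift => x y.
  under eq_tlift => u v do rewrite mulrA.
  rewrite (tlift_Sinvr (F := fun z => tm (z * a) (tm y m))); last klinear_tac.
  rewrite -scalerAl mul1r (klinearZ (f := fun z => tm z (tm y m))); last klinear_tac.
  over.
by rewrite (tlift_counitl bialg (F := fun y => tm a (tm y m))); try klinear_tac.
Qed.

End Antipode.

Theorem lemma4p1 (k : comPzRingType) (tens : tensor_family k) (H : algType k)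
  (Delta : H -> tensor tens H H) (eps : H -> k) :
  is_bialgebra Delta eps ->
  (* (1) the unique natural Omega with mate id is theta *)
  [/\ is_nat_trans Delta (theta_fam Delta) /\ mate_is_id Delta eps (theta_fam Delta),
      (forall Om : hmod_family tens H,
         is_nat_trans Delta Om -> mate_is_id Delta eps Om ->
         forall (M : lmodType k) (act : H -> M -> M), is_hmodule act ->
         forall u, Om M act u = theta Delta u),
      (forall (M : lmodType k) (act : H -> M -> M), is_hmodule act ->
       forall (a b : H) (m : M),
         theta Delta (tmul tens a (tmul tens b m))
         = tlift (tens:=tens) (fun a1 a2 => tmul tens (a1 * b) (tmul tens a2 m)) (Delta a)),
      (* (2) each theta_M is a morphism of Hopf modules T^theta G M -> G T M *)
      (forall (M : lmodType k) (act : H -> M -> M), is_hmodule act ->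
         is_hopf_module_morphism
           (@free_act _ tens H (tensor tens H M))
           (Ttheta_coact Delta (G_coact Delta (M:=M)))
           (diag_act Delta (@free_act _ tens H M))
           (@G_coact _ tens H Delta (tensor tens H M))
           (theta Delta (M:=M)))
    & (* (3) *)
      forall (S Sinv : H -> H),
        is_antipode Delta eps S -> cancel S Sinv -> cancel Sinv S ->
        (forall (M : lmodType k) (act : H -> M -> M), is_hmodule act ->
           cancel (theta Delta (M:=M)) (theta_inv Delta Sinv (M:=M))
           /\ cancel (theta_inv Delta Sinv (M:=M)) (theta Delta (M:=M)))
        /\ is_lax_comonad_morphism Delta (theta_fam Delta)].
Proof.
move=> bialg; have Delta_lin := bialgebra_Delta_klinear bialg.
have theta_nat : is_nat_trans Delta (theta_fam Delta).
  split=> [M act _ | M M' act act' f _ _ [f_lin _] u].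
    exact: (theta_hopf_module_morphism bialg).
  exact: theta_natural.
split=> //.
- by split=> // N act rho N_hopf t; exact: (theta_mate bialg t N_hopf).
- by move=> Om Om_nat Om_mate M act act_hmod u; apply: (natural_mate_id_theta bialg).
- by move=> M act _ a b m; apply: theta_tmul.
- by move=> M act _; apply: (theta_hopf_module_morphism bialg).
move=> S Sinv antipode SK SinvK; split=> [M act _ | M act [act_bilin _ _]].
  split; first exact: (thetaK bialg antipode SK SinvK).
  exact: (theta_invK bialg antipode SK SinvK).
by split=> u; [apply: (T_comult_theta bialg) | apply: T_counit_theta].
Qed.
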